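(* Let $(a_n)_{n\ge1}$ be a relative convex real sequence which is bounded above. Then either $(a_n)_{n\ge1}$ is non-increasing, or every sequence $(t_n)_{n\ge1}\in T_a$ is convergent. More precisely, if some $(t_n)_{n\ge1}\in T_a$ satisfies $t_n\to\infty$, then $\Delta a_n\le0$ for all $n\ge1$.
   Context: For a real sequence $(x_i)$, $\Delta x_i=x_{i+1}-x_i$. ''Increasing'' means strictly increasing. For a real sequence $a=(a_i)_{i\ge1}$, $T_a$ denotes the set of increasing real sequences $(t_i)_{i\ge1}$ such that $(\Delta a_i/\Delta t_i)_{i\ge1}$ is non-decreasing; $a$ is relative convex if $T_a\neq\emptyset$. *)

(* concrete reals R. Sequences (x_i)_{i>=1} are represented as
   functions nat -> R with index shifted by one (x 0 is the paper's x_1). *)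
From Stdlib Require Import Reals.
Open Scope R_scope.

Definition delta (x : nat -> R) (i : nat) : R := x (S i) - x i.

Definition increasing_seq (t : nat -> R) : Prop := forall i, t i < t (S i).

Definition in_T (a t : nat -> R) : Prop :=
  increasing_seq t /\
  forall i, delta a i / delta t i <= delta a (S i) / delta t (S i).

Definition relative_convex (a : nat -> R) : Prop := exists t, in_T a t.

Definition bounded_above (a : nat -> R) : Prop := exists M, forall n, a n <= M.

Definition nonincreasing_seq (a : nat -> R) : Prop := forall i, a (S i) <= a i.

Definition convergent (t : nat -> R) : Prop := exists l, Un_cv t l.

(* For t in T_a the slopes r_i = Delta a_i / Delta t_i are
   non-decreasing, so summing Delta a_j = r_j Delta t_j >= r_k Delta t_j
   over k <= j < n gives the secant bound
        a_n - a_k >= r_k (t_n - t_k)      for k <= n.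
   If Delta a_k > 0 for some k, then r_k > 0 and the bound together with
   a_n <= M confines t_n below t_k + (M - a_k) / r_k: every t in T_a is
   bounded above.  An increasing bounded sequence converges, and a bounded
   sequence cannot tend to infinity; these two facts give the two halves of
   the proposition. *)

From Stdlib Require Import Reals Lra Classical.
Open Scope R_scope.

Section SlopeBounds.

Variables a t : nat -> R.
Hypothesis HT : in_T a t.

Lemma delta_pos_of_increasing (i : nat) : 0 < delta t i.
Proof.
  destruct HT as [Hinc _]. unfold delta. specialize (Hinc i). lra.
Qed.

Lemma slope_monotone (k n : nat) :
  (k <= n)%nat -> delta a k / delta t k <= delta a n / delta t n.
Proof.
  intro Hkn.
  apply Rge_le, (growing_prop (fun i => delta a i / delta t i)); [|exact Hkn].
  intro i. exact (proj2 HT i).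
Qed.

Lemma secant_lower_bound (k n : nat) :
  (k <= n)%nat ->
  delta a k / delta t k * (t n - t k) <= a n - a k.
Proof.
  set (r := delta a k / delta t k).
  induction 1 as [|n Hkn IH].
  - lra.
  - assert (Hstep : r * delta t n <= delta a n).
    { pose proof (delta_pos_of_increasing n) as Hd.
      replace (delta a n) with (delta a n / delta t n * delta t n) by (field; lra).
      apply Rmult_le_compat_r; [lra | exact (slope_monotone k n Hkn)]. }
    unfold delta in Hstep. lra.
Qed.

Lemma bounded_of_positive_increment (M : R) (k : nat) :
  (forall n, a n <= M) -> 0 < delta a k ->
  forall n, t n <= t k + (M - a k) / (delta a k / delta t k).
Proof.
  intros HM Hk n.
  set (r := delta a k / delta t k).
  assert (Hr : 0 < r) by (apply Rdiv_lt_0_compat; [lra | apply delta_pos_of_increasing]).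
  assert (Hgap : 0 <= (M - a k) / r)
    by (apply Rle_mult_inv_pos; [pose proof (HM k); lra | exact Hr]).
  destruct (Nat.le_gt_cases k n) as [Hkn | Hnk].
  - pose proof (secant_lower_bound k n Hkn) as Hsec. fold r in Hsec.
    pose proof (HM n).
    assert (t n - t k <= (M - a k) / r).
    { apply (Rmult_le_reg_l r); [exact Hr|]. field_simplify; lra. }
    lra.
  - assert (Hmono : t n <= t k).
    { apply Rge_le, (growing_prop t); [|apply Nat.lt_le_incl, Hnk].
      intro i. left. exact (proj1 HT i). }
    lra.
Qed.

End SlopeBounds.

Lemma increasing_bounded_convergent (t : nat -> R) (B : R) :
  increasing_seq t -> (forall n, t n <= B) -> convergent t.
Proof.
  intros Hinc HB.
  assert (Hg : Un_growing t) by (intro n; left; apply Hinc).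
  assert (Hu : has_ub t) by (exists B; intros x [n ->]; apply HB).
  destruct (growing_cv t Hg Hu) as [l Hl]. exists l. exact Hl.
Qed.

Lemma bounded_not_cv_infty (t : nat -> R) (B : R) :
  (forall n, t n <= B) -> ~ cv_infty t.
Proof.
  intros HB Hc. destruct (Hc B) as [N HN].
  specialize (HN N (le_n N)). specialize (HB N). lra.
Qed.

Theorem proposition3p4 (a : nat -> R) :
  relative_convex a -> bounded_above a ->
  (nonincreasing_seq a \/ (forall t, in_T a t -> convergent t)) /\
  ((exists t, in_T a t /\ cv_infty t) -> forall i, delta a i <= 0).
Proof.
  intros _ [M HM]. split.
  - destruct (classic (exists k, 0 < delta a k)) as [[k Hk] | Hnone].
    + right. intros t HT.
      exact (increasing_bounded_convergent t _ (proj1 HT)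
               (bounded_of_positive_increment a t HT M k HM Hk)).
    + left. intro i. apply Rnot_lt_le. intro Hi.
      apply Hnone. exists i. unfold delta. lra.
  - intros [t [HT Hc]] i. apply Rnot_lt_le. intro Hi.
    exact (bounded_not_cv_infty t _ (bounded_of_positive_increment a t HT M i HM Hi) Hc).
Qed.
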